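(* For every pair of positive integers $g,k$, every graph $G_{g,k}$ obtained by the construction described in the context has a proper edge-colouring in which each cycle contains no colour exactly once.
   Context: Hypergraph notions. A closed walk of length $\ell$ in a hypergraph $H$ is a sequence $v_0F_0v_1F_1\ldots F_{\ell-1}v_0$ with $v_i,v_{i+1}\in F_i$ for all $0\le i<\ell$ (indices mod $\ell$), $F_i\ne F_{i+1}$ for all $i$ (indices mod $\ell$), and $v_1,\ldots,v_{\ell-1}$ pairwise distinct. An $r$-uniform hypergraph $H$ is tranquil, witnessed by labellings $\lambda=\{\lambda_F\}_{F\in E(H)}$ with $\lambda_F:F\to\{1,\dots,r\}$, if for every closed walk $W=v_0F_0\ldots F_{\ell-1}v_0$ the multigraph on $\{1,\dots,r\}$ with edge multiset $\{\lambda_{F_i}(v_i)\lambda_{F_i}(v_{i+1}):0\le i<\ell\}$ is bridgeless. The chromatic number of a hypergraph is the least number of colours in a vertex colouring with no monochromatic hyperedge; its girth is the length of a shortest Berge cycle (distinct hyperedges $F_1,\dots,F_\ell$ and distinct vertices $x_1,\dots,x_\ell$ with $x_i\in F_i\cap F_{i+1}$, indices mod $\ell$). Construction. Fix a positive integer $g$. $G_{g,1}$ is a single vertex. For $k\ge 2$, given a graph $G_{g,k-1}$ obtained by the construction, with vertex set identified with $\{1,\dots,r\}$, take a finite tranquil $r$-uniform hypergraph $H$ with chromatic number at least $k$ and girth at least $\lceil g/3\rceil$, together with tranquility-witnessing labellings $\lambda_F$, each $\lambda_F:F\to\{1,\dots,r\}$ a bijection. The graph $G_{g,k}$ consists of an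 independent set $T$ with a bijection $\nu:T\to V(H)$, together with, for each hyperedge $F\in E(H)$, a disjoint copy $G_F$ of $G_{g,k-1}$; for each $F\in E(H)$ one adds the perfect matching between $G_F$ and $\nu^{-1}(F)$ joining the vertex of $G_F$ corresponding to $i\in\{1,\dots,r\}$ to the vertex $t\in\nu^{-1}(F)$ with $\lambda_F(\nu(t))=i$. No other edges are present. A proper edge-colouring gives adjacent edges distinct colours; ''each cycle contains no colour exactly once'' means that for every cycle $C$ and every colour $c$, the number of edges of $C$ coloured $c$ is not $1$. *)

From HB Require Import structures.
From mathcomp Require Export all_boot.
Set Implicit Arguments. Unset Strict Implicit. Unset Printing Implicit Defensive.

(* A hypergraph: vertex finType V, hyperedge finType E, and he : E -> {set V}
   giving the vertex set of each hyperedge (required injective in the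
   construction, i.e. E(H) is a set of subsets of V). Indices of walks and
   cycles are taken modulo their length l. *)
Section Hyper.
Variables (V E : finType) (he : E -> {set V}).

Definition closed_walk (l : nat) (vs : nat -> V) (Fs : nat -> E) : Prop :=
  0 < l /\
  (forall i, i < l ->
     [/\ vs i \in he (Fs i), vs (i.+1 %% l) \in he (Fs i) & Fs i <> Fs (i.+1 %% l)]) /\
  (forall i j, 0 < i -> i < j -> j < l -> vs i <> vs j).

(* The multigraph on 'I_r with edges {A i, B i} (i < l) is bridgeless:
   no edge j is a bridge, i.e. its endpoints stay connected after deleting it
   (loops are never bridges). *)
Definition bridgeless_multigraph (r l : nat) (A B : nat -> 'I_r) : Prop :=
  forall j, j < l ->
    connect (fun a b : 'I_r => [exists i : 'I_l, (val i != j) &&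
               (((a == A i) && (b == B i)) || ((a == B i) && (b == A i)))])
            (A j) (B j).

(* tranquility witnessed by labellings lam F : F -> {1..r} (encoded as 'I_r) *)
Definition tranquil (r : nat) (lam : E -> V -> 'I_r) : Prop :=
  forall l vs Fs, closed_walk l vs Fs ->
    bridgeless_multigraph l (fun i => lam (Fs i) (vs i))
                            (fun i => lam (Fs i) (vs (i.+1 %% l))).

Definition uniform (r : nat) : Prop := forall F, #|he F| = r.

Definition monochromatic (m : nat) (c : V -> 'I_m) (F : E) : Prop :=
  forall x y, x \in he F -> y \in he F -> c x = c y.

Definition chromatic_ge (k : nat) : Prop :=
  forall m, m < k -> forall c : V -> 'I_m, exists F, monochromatic c F.

Definition berge_cycle (l : nat) (xs : nat -> V) (Fs : nat -> E) : Prop :=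
  2 <= l /\
  (forall i j, i < j -> j < l -> Fs i <> Fs j /\ xs i <> xs j) /\
  (forall i, i < l -> xs i \in he (Fs i) /\ xs i \in he (Fs (i.+1 %% l))).

Definition girth_ge (m : nat) : Prop :=
  forall l xs Fs, berge_cycle l xs Fs -> m <= l.

End Hyper.

(* vertices: inl t  (t in T, identified with V(H) via nu = id),
             inr (F, x) (vertex x of the copy G_F of G_{g,k-1}) *)
Definition gstep_rel (T0 : finType) (e0 : rel T0) (V E : finType)
  (he : E -> {set V}) (phi : T0 -> 'I_#|T0|) (lam : E -> V -> 'I_#|T0|)
  : rel (V + (E * T0)) :=
  fun a b => match a, b with
  | inl _, inl _ => false
  | inl t, inr (F, x) => (t \in he F) && (lam F t == phi x)
  | inr (F, x), inl t => (t \in he F) && (lam F t == phi x)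
  | inr (F, x), inr (F', y) => (F == F') && e0 x y
  end.

(* constructed g k T e : the graph (T, e) is (isomorphic to) a graph G_{g,k}
   obtained by the construction. *)
Inductive constructed (g : nat) : nat -> forall T : finType, rel T -> Prop :=
| constructed_base (T : finType) (e : rel T) :
    #|T| = 1 -> irreflexive e -> constructed g 1 e
| constructed_step (k : nat) (T0 : finType) (e0 : rel T0)
    (V E : finType) (he : E -> {set V})
    (phi : T0 -> 'I_#|T0|) (lam : E -> V -> 'I_#|T0|)
    (T : finType) (e : rel T) (f : T -> V + (E * T0)) :
    constructed g k e0 ->
    bijective phi ->                      (* V(G_{g,k-1}) identified with {1..r} *)
    injective he ->
    uniform he #|T0| ->
    chromatic_ge he k.+1 ->
    girth_ge he ((g + 2) %/ 3) ->         (* girth >= ceil(g/3) *)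
    tranquil he lam ->
    (forall F, {in he F &, injective (lam F)}) -> (* each lam_F a bijection *)
    bijective f ->
    (forall x y, e x y = gstep_rel e0 he phi lam (f x) (f y)) ->
    constructed g k.+1 e.

Section Colour.
Variables (T : finType) (e : rel T).

Definition proper_edge_colouring (c : T -> T -> nat) : Prop :=
  (forall x y, e x y -> c x y = c y x) /\
  (forall x y z, e x y -> e x z -> y != z -> c x y <> c x z).

Definition graph_cycle (l : nat) (xs : nat -> T) : Prop :=
  3 <= l /\
  (forall i j, i < j -> j < l -> xs i <> xs j) /\
  (forall i, i < l -> e (xs i) (xs (i.+1 %% l))).

Definition no_colour_exactly_once (c : T -> T -> nat) : Prop :=
  forall l xs, graph_cycle l xs -> forall col : nat,
    \sum_(i < l) (c (xs i) (xs (i.+1 %% l)) == col) <> 1.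

End Colour.

From mathcomp Require Import all_boot zify.
Set Implicit Arguments. Unset Strict Implicit. Unset Printing Implicit Defensive.

(* Call an edge colouring separating if deleting all edges of the colour of an
   edge xy disconnects x from y; then no cycle uses a colour exactly once.
   Separating colourings survive one step of the construction: keep the
   colouring (doubled) inside every copy G_F and give all matching edges at
   G_F the fresh odd colour 2F+1.  Once that colour is deleted, G_F is cut off
   from T.  For an edge xy of G_F of colour d, contract each copy along the
   components of G_{g,k-1} minus colour d: a path from x to y avoiding colour
   2d becomes a path between two different classes of the same copy in the
   bipartite graph joining T to the classes, and a shortest such path is a
   closed walk of H whose closing edge is a bridge of its label multigraph,
   contradicting tranquility. *)

Lemma connect_homo (T1 T2 : finType) (R1 : rel T1) (R2 : rel T2) (h : T1 -> T2) :
  (forall a b, R1 a b -> connect R2 (h a) (h b)) ->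
  forall x y, connect R1 x y -> connect R2 (h x) (h y).
Proof.
move=> hR x _ /connectP[p Rp ->]; elim: p x Rp => //= z p IHp x /andP[Rxz /IHp].
exact: connect_trans (hR _ _ Rxz).
Qed.

Lemma connect_pred_closed (T : finType) (R : rel T) (P : T -> Prop) :
  (forall a b, R a b -> P a -> P b) -> forall x y, connect R x y -> P x -> P y.
Proof.
move=> hR x _ /connectP[p Rp ->]; elim: p x Rp => //= z p IHp x /andP[Rxz Rp] Px.
exact: IHp Rp (hR _ _ Rxz Px).
Qed.

Lemma connect_invariant (T : finType) (A : Type) (R : rel T) (k : T -> A) :
  (forall a b, R a b -> k a = k b) -> forall x y, connect R x y -> k x = k y.
Proof.
move=> hR x y /(connect_pred_closed (P := fun z => k x = k z)); apply=> //.
by move=> a b /hR ->.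
Qed.

Lemma path_alternates (T : Type) (R : rel T) (f : T -> bool) :
  (forall u w, R u w -> f w = ~~ f u) ->
  forall s p i, path R s p -> i <= size p -> f (nth s (s :: p) i) = f s (+) odd i.
Proof.
move=> hR s p; elim: p s => [|w p IHp] s [|i] //=; rewrite ?addbF //.
case/andP=> /hR Rsw Rp lti; rewrite (set_nth_default w) // IHp // Rsw.
by case: (f s); case: (odd i).
Qed.

Lemma connect_cycle_arc (T : finType) (R : rel T) (l j : nat) (xs : nat -> T) :
  j < l -> (forall i, i < l -> i != j -> R (xs i) (xs (i.+1 %% l))) ->
  connect R (xs (j.+1 %% l)) (xs j).
Proof.
move=> ltjl hR.
have along n : n < l -> connect R (xs (j.+1 %% l)) (xs ((j.+1 + n) %% l)).
  elim: n => [|n IHn] ltnl; first by rewrite addn0.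
  apply: connect_trans (IHn (ltnW ltnl)) (connect1 _).
  have -> : (j.+1 + n.+1) %% l = ((j.+1 + n) %% l).+1 %% l.
    by rewrite -[(_ %% l).+1]addn1 modnDml addn1 addnS.
  apply: hR; first by rewrite ltn_mod; lia.
  apply/eqP => /(congr1 (modn^~ l)); rewrite modn_mod -[X in _ = X %% l]addn0.
  by move/eqP; rewrite addSnnS eqn_modDl mod0n modn_small.
have := along l.-1 ltac:(lia).
by rewrite addSnnS prednK ?modnDr ?(modn_small ltjl) //; lia.
Qed.

Section SeparatingColouring.
Variables (T : finType) (e : rel T) (c : T -> T -> nat).

Definition drop_colour (col : nat) : rel T := fun a b => e a b && (c a b != col).

Definition separating_edge_colouring : Prop :=
  [/\ symmetric e, proper_edge_colouring e c &
      forall x y, e x y -> ~~ connect (drop_colour (c x y)) x y].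

Lemma drop_colour_sym col :
  symmetric e -> (forall x y, e x y -> c x y = c y x) -> symmetric (drop_colour col).
Proof.
move=> sym_e c_sym x y; rewrite /drop_colour sym_e.
by case: (boolP (e y x)) => // /c_sym ->.
Qed.

Lemma separating_no_colour_exactly_once :
  separating_edge_colouring -> no_colour_exactly_once e c.
Proof.
case=> sym_e [c_sym _] sep l xs [_ [_ exs]] col /eqP /sum_nat_eq1[j [_ cj others]].
set x := xs j; set y := xs (j.+1 %% l).
have col_xy : c x y = col by case: eqP cj.
have : connect (drop_colour col) y x.
  apply: connect_cycle_arc => // i lt_il neq_ij; rewrite /drop_colour exs //=.
  have := others (Ordinal lt_il); rewrite -val_eqE /= neq_ij => /(_ isT isT).
  by case: eqP.
by rewrite -col_xy (sym_connect_sym (drop_colour_sym _ sym_e c_sym)); apply/negP/sep/exs.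
Qed.

End SeparatingColouring.

Section ClassIncidence.
Variables (V E : finType) (he : E -> {set V}) (r : nat) (lam : E -> V -> 'I_r).

Lemma tranquil_closing_step (A : Type) (cl : 'I_r -> A) l vs Fs :
  tranquil he lam -> closed_walk he l vs Fs ->
  (forall i, i.+1 < l -> cl (lam (Fs i) (vs i)) = cl (lam (Fs i) (vs i.+1))) ->
  cl (lam (Fs l.-1) (vs l.-1)) = cl (lam (Fs l.-1) (vs 0)).
Proof.
move=> tr cw cl_step; have [l_gt0 _] := cw.
have := tr _ _ _ cw l.-1 ltac:(lia); rewrite prednK // modnn.
apply: connect_invariant => a b /existsP[[i lt_il] /andP[/= neq_il ab]].
have lt_i1l : i.+1 < l by move/eqP: neq_il; lia.
rewrite (modn_small lt_i1l) in ab.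
by case/orP: ab => /andP[/eqP-> /eqP->]; rewrite cl_step.
Qed.

Variables (C : finType) (cl : 'I_r -> C).

Definition incident (t : V) (G : E) (z : C) := (t \in he G) && (cl (lam G t) == z).

Definition class_incidence : rel (V + E * C) := fun u w =>
  match u, w with
  | inl t, inr (G, z) | inr (G, z), inl t => incident t G z
  | _, _ => false
  end.

Definition is_class_node (u : V + E * C) := if u is inr _ then true else false.

Lemma incident_class_uniq t G z z' : incident t G z -> incident t G z' -> z = z'.
Proof. by case/andP=> _ /eqP <- /andP[_ /eqP <-]. Qed.

Lemma class_incidence_bipartite u w :
  class_incidence u w -> is_class_node w = ~~ is_class_node u.
Proof. by case: u => [?|[? ?]]; case: w => [?|[? ?]]. Qed.

Section ShortestClassPath.
Variables (t0 : V) (F : E) (a b : C) (p : seq (V + E * C)).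
Let s : V + E * C := inr (F, a).
Let node i := nth s (s :: p) i.
Let n := size p.
Hypotheses (path_p : path class_incidence s p) (uniq_p : uniq (s :: p))
  (last_p : last s p = inr (F, b)) (neq_ab : a != b).

Lemma node_step i : i < n -> class_incidence (node i) (node i.+1).
Proof. by move=> lt_in; apply: (pathP s path_p). Qed.

Lemma node_inj i j : i <= n -> j <= n -> node i = node j -> i = j.
Proof. by move=> le_in le_jn /eqP; rewrite /node nth_uniq ?ltnS // => /eqP. Qed.

Lemma node_last : node n = inr (F, b).
Proof. by rewrite /node -last_p (last_nth s). Qed.

Lemma node_parity i : i <= n -> is_class_node (node i) = ~~ odd i.
Proof.
by move=> le_in; rewrite /node (path_alternates class_incidence_bipartite path_p).
Qed.

Let m := n./2.

Lemma size_path_double : n = m.*2.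
Proof.
have := node_parity (leqnn n); rewrite node_last => /esym even_n.
by rewrite -[LHS]odd_double_half (negbTE even_n).
Qed.

Lemma walk_length_gt0 : 0 < m.
Proof.
rewrite lt0n; apply: contraNneq neq_ab => m0.
have p0 : p = [::] by apply/size0nil; rewrite -/n size_path_double m0.
by move: last_p; rewrite p0 => -[->].
Qed.

(* The path (F, a), v_0, (F_0, z_0), v_1, ..., v_{m-1}, (F_{m-1}, z_{m-1}) = (F, b)
   is read as the closed walk v_0 F_0 v_1 ... F_{m-1} v_0; t0 is a junk default. *)
Let vs i := if node (2 * i).+1 is inl t then t else t0.
Let Fs i := if node (2 * i).+2 is inr (G, _) then G else F.
Let zs i := if node (2 * i).+2 is inr (_, z) then z else a.

Lemma node_odd i : i < m -> node (2 * i).+1 = inl (vs i).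
Proof.
move=> lt_im; have n_eq := size_path_double.
have := node_parity (i := (2 * i).+1) ltac:(lia).
by rewrite /= oddM /vs; case: (node _).
Qed.

Lemma node_even i : i < m -> node (2 * i).+2 = inr (Fs i, zs i).
Proof.
move=> lt_im; have n_eq := size_path_double.
have := node_parity (i := (2 * i).+2) ltac:(lia).
by rewrite /= oddM /Fs /zs; case: (node _) => [|[]].
Qed.

Lemma walk_last : Fs m.-1 = F /\ zs m.-1 = b.
Proof.
have n_eq := size_path_double; have m_gt0 := walk_length_gt0.
have := node_even (i := m.-1) ltac:(lia).
have -> : (2 * m.-1).+2 = n by lia.
by rewrite node_last => -[].
Qed.

Lemma incident_first : incident (vs 0) F a.
Proof.
have := node_step (i := 0); rewrite [node 1](node_odd walk_length_gt0).
by apply; rewrite size_path_double -muln2 muln_gt0 walk_length_gt0.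
Qed.

Lemma incident_left i : i < m -> incident (vs i) (Fs i) (zs i).
Proof.
move=> lt_im; have n_eq := size_path_double.
by have := node_step (i := (2 * i).+1) ltac:(lia); rewrite node_odd // node_even.
Qed.

Lemma incident_right i : i.+1 < m -> incident (vs i.+1) (Fs i) (zs i).
Proof.
move=> lt_i1m; have n_eq := size_path_double.
have := node_step (i := (2 * i).+2) ltac:(lia).
have -> : (2 * i).+3 = (2 * i.+1).+1 by lia.
by rewrite node_even ?node_odd //; lia.
Qed.

Lemma walk_vertices_inj i j : i < m -> j < m -> vs i = vs j -> i = j.
Proof.
move=> lt_im lt_jm vs_eq; have n_eq := size_path_double.
have := node_inj (i := (2 * i).+1) (j := (2 * j).+1) ltac:(lia) ltac:(lia).
by rewrite !node_odd // vs_eq => /(_ erefl); lia.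
Qed.

Lemma walk_hyperedges_neq i : i < m -> Fs i <> Fs (i.+1 %% m).
Proof.
move=> lt_im; have n_eq := size_path_double; have m_gt0 := walk_length_gt0.
have [lt_i1m | le_mi1] := ltnP i.+1 m.
  rewrite modn_small // => Fs_eq; have := incident_right lt_i1m.
  rewrite Fs_eq => /incident_class_uniq/(_ (incident_left lt_i1m)) zs_eq.
  have := node_inj (i := (2 * i).+2) (j := (2 * i.+1).+2) ltac:(lia) ltac:(lia).
  by rewrite !node_even // Fs_eq zs_eq => /(_ erefl); lia.
have -> : i = m.-1 by lia.
rewrite prednK // modnn (proj1 walk_last) => F_eq; have := incident_left m_gt0.
rewrite -F_eq => /incident_class_uniq/(_ incident_first) zs_eq.
have := node_inj (i := (2 * 0).+2) (j := 0) ltac:(lia) ltac:(lia).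
by rewrite node_even // -F_eq zs_eq => /(_ erefl).
Qed.

Lemma walk_closed : closed_walk he m vs Fs.
Proof.
have m_gt0 := walk_length_gt0; split=> //.
split=> [i lt_im | i j _ lt_ij lt_jm /walk_vertices_inj]; last first.
  by move=> /(_ (ltn_trans lt_ij lt_jm) lt_jm); lia.
split; [by case/andP: (incident_left lt_im) | | exact: walk_hyperedges_neq].
have [lt_i1m | le_mi1] := ltnP i.+1 m.
  by rewrite modn_small //; case/andP: (incident_right lt_i1m).
have -> : i = m.-1 by lia.
by rewrite prednK // modnn (proj1 walk_last); case/andP: incident_first.
Qed.

Lemma shortest_class_path_contradiction : tranquil he lam -> False.
Proof.
move=> tr; have m_gt0 := walk_length_gt0.
have cl_zs i : i < m -> cl (lam (Fs i) (vs i)) = zs i.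
  by move/incident_left/andP=> [_ /eqP].
have cl_step i : i.+1 < m -> cl (lam (Fs i) (vs i)) = cl (lam (Fs i) (vs i.+1)).
  by move=> lt_i1m; rewrite cl_zs 1?ltnW //; case/andP: (incident_right lt_i1m) => _ /eqP.
have := tranquil_closing_step tr walk_closed cl_step.
rewrite cl_zs ?prednK // (proj2 walk_last) (proj1 walk_last).
case/andP: incident_first => _ /eqP -> ba.
by move: neq_ab; rewrite ba eqxx.
Qed.

End ShortestClassPath.

Lemma class_incidence_separates F a b : tranquil he lam -> a != b ->
  ~~ connect class_incidence (inr (F, a)) (inr (F, b)).
Proof.
move=> tr neq_ab; apply/negP => /connectP[p0 path_p0 last_p0].
case: (shortenP path_p0) last_p0 => p path_p uniq_p _ last_p.
case: p => [|[t0|//] p] in path_p uniq_p last_p.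
  by case: last_p => ba; rewrite ba eqxx in neq_ab.
exact: (shortest_class_path_contradiction t0 path_p uniq_p (esym last_p) neq_ab tr).
Qed.

End ClassIncidence.

Section ConstructionStep.
Variables (T0 : finType) (e0 : rel T0) (c0 : T0 -> T0 -> nat) (V E : finType)
  (he : E -> {set V}) (phi : T0 -> 'I_#|T0|) (phiinv : 'I_#|T0| -> T0)
  (lam : E -> V -> 'I_#|T0|).
Hypotheses (phiK : cancel phi phiinv)
  (lam_inj : forall F, {in he F &, injective (lam F)}).
Local Notation e := (gstep_rel e0 he phi lam).

Definition step_colouring (u w : V + E * T0) : nat :=
  match u, w with
  | inr (_, x), inr (_, y) => (c0 x y).*2
  | inl _, inr (F, _) | inr (F, _), inl _ => (enum_rank F).*2.+1
  | inl _, inl _ => 0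
  end.

Lemma gstep_rel_sym : symmetric e0 -> symmetric e.
Proof. by move=> sym_e0 [t|[F x]] [t'|[F' y]] //=; rewrite eq_sym sym_e0. Qed.

Lemma step_colouring_proper :
  proper_edge_colouring e0 c0 -> proper_edge_colouring e step_colouring.
Proof.
case=> c0_sym c0_proper; split=> [[t|[F x]] [t'|[F' y]] //= /andP[_ /c0_sym ->] //|].
move=> [t|[F x]] [t'|[F' y]] [t''|[F'' z]] //=.
- move=> /andP[_ /eqP lam_y] /andP[_ /eqP lam_z] neq_yz /eqP.
  rewrite eqSS (inj_eq double_inj) => /eqP/val_inj/enum_rank_inj F_eq.
  by move: lam_z neq_yz; rewrite -F_eq lam_y => /(can_inj phiK) ->; rewrite eqxx.
- move=> /andP[tF /eqP lam_t] /andP[t'F /eqP lam_t'] neq_tt' _.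
  by move: neq_tt'; rewrite (lam_inj tF t'F (etrans lam_t (esym lam_t'))) eqxx.
- by move=> _ _ _ /(congr1 odd); rewrite /= !odd_double.
- by move=> _ _ _ /(congr1 odd); rewrite /= !odd_double.
- move=> /andP[/eqP<- e0xy] /andP[/eqP<- e0xz] neq_yz /double_inj.
  by apply: c0_proper e0xy e0xz _; apply: contraNneq neq_yz => ->.
Qed.

Lemma matching_edge_separated F x t :
  ~~ connect (drop_colour e step_colouring (enum_rank F).*2.+1) (inr (F, x)) (inl t).
Proof.
pose in_copy (w : V + E * T0) : Prop := if w is inr (G, _) then G = F else False.
apply/negP => /(connect_pred_closed (P := in_copy)); apply=> //.
move=> [u|[G u]] [w|[G' w]] //=; rewrite /drop_colour /=.
- by move=> /andP[_]; apply: contraNnot => ->.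
- by case/andP=> /andP[/eqP-> _] _.
Qed.

Lemma copy_edge_separated F x y :
  separating_edge_colouring e0 c0 -> tranquil he lam -> e0 x y ->
  ~~ connect (drop_colour e step_colouring (c0 x y).*2) (inr (F, x)) (inr (F, y)).
Proof.
case=> sym_e0 [c0_sym _] sep0 tr e0xy.
pose K := drop_colour e0 c0 (c0 x y).
have K_sym := sym_connect_sym (drop_colour_sym (c0 x y) sym_e0 c0_sym).
pose cl i := root K (phiinv i).
have neq_cl : root K x != root K y by rewrite (root_connect K_sym) sep0.
apply: contra (class_incidence_separates cl F tr neq_cl).
have incident_matching G t z :
    (t \in he G) && (lam G t == phi z) -> incident he lam cl t G (root K z).
  by case/andP=> tG /eqP lam_t; rewrite /incident tG lam_t /cl phiK eqxx.
pose h u : V + E * T0 := if u is inr (G, z) then inr (G, root K z) else u.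
apply: (connect_homo (h := h)) => -[u|[G u]] [w|[G' w]] //=; rewrite /drop_colour /=.
- by case/andP=> /incident_matching uG'w _; apply: connect1.
- by case/andP=> /incident_matching wGu _; apply: connect1.
- case/andP=> /andP[/eqP<- e0uw]; rewrite (inj_eq double_inj) => neq_col.
  by apply/eq_connect0; congr inr; congr pair; apply/(rootP K_sym)/connect1/andP.
Qed.

Lemma step_separating :
  separating_edge_colouring e0 c0 -> tranquil he lam ->
  separating_edge_colouring e step_colouring.
Proof.
move=> sep0 tr; have [sym_e0 proper0 _] := sep0.
have proper := step_colouring_proper proper0.
have sym_e := gstep_rel_sym sym_e0.
split=> // -[t|[F x]] [t'|[F' y]] //=.
- rewrite (sym_connect_sym (drop_colour_sym _ sym_e proper.1)) => _.
  exact: matching_edge_separated.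
- by move=> _; apply: matching_edge_separated.
- by case/andP=> /eqP<- e0xy; apply: copy_edge_separated.
Qed.

End ConstructionStep.

Lemma separating_edge_colouring_single_vertex (T : finType) (e : rel T)
    (c : T -> T -> nat) :
  #|T| = 1 -> irreflexive e -> separating_edge_colouring e c.
Proof.
move=> card_T irr_e.
have no_edge x y : e x y = false.
  by have /fintype_le1P/(_ x) -> : #|T| <= 1 by rewrite card_T.
by split=> [x y||x y]; rewrite ?no_edge //; split=> x y; rewrite no_edge.
Qed.

Lemma separating_edge_colouring_embed (T U : finType) (e : rel T) (e' : rel U)
    (f : T -> U) (c' : U -> U -> nat) :
  injective f -> (forall x y, e x y = e' (f x) (f y)) ->
  separating_edge_colouring e' c' ->
  separating_edge_colouring e (fun x y => c' (f x) (f y)).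
Proof.
move=> f_inj ef [sym_e' [c'_sym c'_proper] sep']; split.
- by move=> x y; rewrite !ef sym_e'.
- split=> [x y|x y z]; rewrite !ef; first exact: c'_sym.
  by move=> e'xy e'xz neq_yz; apply: c'_proper e'xy e'xz _; rewrite (inj_eq f_inj).
- move=> x y; rewrite ef => /sep'; apply: contra.
  by apply: connect_homo => a b; rewrite /drop_colour ef => e'ab; apply: connect1.
Qed.

Lemma constructed_separating (g k : nat) (T : finType) (e : rel T) :
  constructed g k e -> exists c, separating_edge_colouring e c.
Proof.
elim=> {k T e} [T e card_T irr_e|k T0 e0 V E he phi lam T e f _ [c0 sep0]].
  by exists (fun _ _ => 0); apply: separating_edge_colouring_single_vertex.
move=> [phiinv phiK _] _ _ _ _ tr lam_inj [finv fK _] ef.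
exists (fun x y => step_colouring c0 (f x) (f y)).
apply: separating_edge_colouring_embed (can_inj fK) ef _.
exact: step_separating phiK lam_inj sep0 tr.
Qed.

Theorem lemma4p1 (g k : nat) (T : finType) (e : rel T) :
  0 < g -> 0 < k -> constructed g k e ->
  exists c : T -> T -> nat,
    proper_edge_colouring e c /\ no_colour_exactly_once e c.
Proof.
move=> _ _ /constructed_separating[c sep].
exists c; split; first by case: sep.
exact: separating_no_colour_exactly_once.
Qed.
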